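(* Every locally sofic monoid is sofic.
   Context: A monoid is locally sofic if every finitely generated submonoid of it is sofic (submonoids contain the identity). For a non-empty finite set $X$, $\mathrm{Map}(X)$ is the monoid of all maps $X\to X$ under composition (identity $\mathrm{Id}_X$) with the Hamming metric $d_X(f,g)=|\{x\in X : f(x)\ne g(x)\}|/|X|$. For a monoid $M$, finite $K\subset M$ and $\varepsilon,\alpha>0$, a map $\varphi\colon M\to\mathrm{Map}(X)$ is a $(K,\varepsilon)$-morphism if $d_X(\varphi(k_1k_2),\varphi(k_1)\varphi(k_2))\le\varepsilon$ for all $k_1,k_2\in K$ and $d_X(\varphi(1_M),\mathrm{Id}_X)\le\varepsilon$; it is $(K,\alpha)$-injective if $d_X(\varphi(k_1),\varphi(k_2))\ge\alpha$ for all distinct $k_1,k_2\in K$. $M$ is sofic if for every finite $K\subset M$ and every $\varepsilon>0$ there exist a non-empty finite set $X$ and a $(K,1-\varepsilon)$-injective $(K,\varepsilon)$-morphism $\varphi\colon M\to\mathrm{Map}(X)$. *)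

From mathcomp Require Import all_boot.
From Stdlib Require Import Reals.

Set Implicit Arguments.
Unset Strict Implicit.
Unset Printing Implicit Defensive.

Definition monoid_laws (M : Type) (mul : M -> M -> M) (one : M) : Prop :=
  (forall x y z, mul x (mul y z) = mul (mul x y) z) /\
  (forall x, mul one x = x) /\ (forall x, mul x one = x).

Definition hamming (X : finType) (f g : X -> X) : R :=
  (INR #|[set x | f x != g x]| / INR #|X|)%R.

Definition is_Keps_morphism (M : Type) (mul : M -> M -> M) (one : M)
    (X : finType) (phi : M -> X -> X) (K : seq M) (eps : R) : Prop :=
  (forall k1 k2, List.In k1 K -> List.In k2 K ->
     (hamming (phi (mul k1 k2)) (fun x => phi k1 (phi k2 x)) <= eps)%R) /\
  (hamming (phi one) (fun x => x) <= eps)%R.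

Definition is_Kalpha_injective (M : Type) (X : finType) (phi : M -> X -> X)
    (K : seq M) (alpha : R) : Prop :=
  forall k1 k2, List.In k1 K -> List.In k2 K -> k1 <> k2 ->
    (alpha <= hamming (phi k1) (phi k2))%R.

Definition sofic (M : Type) (mul : M -> M -> M) (one : M) : Prop :=
  forall (K : seq M) (eps : R), (0 < eps)%R ->
    exists (X : finType) (phi : M -> X -> X),
      0 < #|X| /\
      is_Kalpha_injective phi K (1 - eps)%R /\
      is_Keps_morphism mul one phi K eps.

Inductive gen_submonoid (M : Type) (mul : M -> M -> M) (one : M) (G : seq M)
  : M -> Prop :=
  | gen_one : gen_submonoid mul one G one
  | gen_gen : forall g, List.In g G -> gen_submonoid mul one G g
  | gen_mul : forall x y, gen_submonoid mul one G x -> gen_submonoid mul one G y ->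
              gen_submonoid mul one G (mul x y).

Definition sub_carrier (M : Type) (mul : M -> M -> M) (one : M) (G : seq M) :=
  {x : M | gen_submonoid mul one G x}.

Definition sub_mul (M : Type) (mul : M -> M -> M) (one : M) (G : seq M)
  (a b : sub_carrier mul one G) : sub_carrier mul one G :=
  exist _ (mul (proj1_sig a) (proj1_sig b)) (gen_mul (proj2_sig a) (proj2_sig b)).

Definition sub_one (M : Type) (mul : M -> M -> M) (one : M) (G : seq M)
  : sub_carrier mul one G := exist _ one (gen_one mul one G).

Definition locally_sofic (M : Type) (mul : M -> M -> M) (one : M) : Prop :=
  forall G : seq M, sofic (@sub_mul M mul one G) (@sub_one M mul one G).

From mathcomp Require Import all_boot.
From Stdlib Require Import Reals.
From Stdlib Require Import ClassicalDescription ProofIrrelevance.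

Set Implicit Arguments.
Unset Strict Implicit.

(* A finite set K lies in the submonoid generated by K itself.  Retracting M
   onto that submonoid (identity on it, arbitrary elsewhere) is injective and
   multiplicative on K and fixes the unit, so composing a sofic approximation
   of the submonoid with the retraction is a sofic approximation of M for K. *)

Section Transfer.

Variables (M N : Type) (mulM : M -> M -> M) (oneM : M).
Variables (mulN : N -> N -> N) (oneN : N) (f : M -> N) (K : seq M).
Variables (X : finType) (psi : N -> X -> X).

Lemma Kalpha_injective_comp (alpha : R) :
  (forall k1 k2, List.In k1 K -> List.In k2 K -> f k1 = f k2 -> k1 = k2) ->
  is_Kalpha_injective psi (map f K) alpha ->
  is_Kalpha_injective (fun m => psi (f m)) K alpha.
Proof.
move=> f_inj psi_inj k1 k2 K1 K2 k12.
apply: psi_inj; try exact: List.in_map.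
by move=> f12; apply/k12/f_inj.
Qed.

Lemma Keps_morphism_comp (eps : R) :
  (forall k1 k2, List.In k1 K -> List.In k2 K -> f (mulM k1 k2) = mulN (f k1) (f k2)) ->
  f oneM = oneN ->
  is_Keps_morphism mulN oneN psi (map f K) eps ->
  is_Keps_morphism mulM oneM (fun m => psi (f m)) K eps.
Proof.
move=> f_mul f_one [psi_mul psi_one]; rewrite /is_Keps_morphism f_one; split=> //.
move=> k1 k2 K1 K2; rewrite f_mul //.
by apply: psi_mul; apply: List.in_map.
Qed.

End Transfer.

Section Retraction.

Variables (M : Type) (mul : M -> M -> M) (one : M) (G : seq M).

Local Notation S := (sub_carrier mul one G).

Definition sub_retract (m : M) : S :=
  match excluded_middle_informative (gen_submonoid mul one G m) with
  | left p => exist _ m p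
  | right _ => sub_one mul one G
  end.

Lemma sub_retractE {m} (p : gen_submonoid mul one G m) : sub_retract m = exist _ m p.
Proof.
rewrite /sub_retract; case: excluded_middle_informative => [q|[]] //.
by rewrite (proof_irrelevance _ q p).
Qed.

Lemma sub_retract_inj_gen k1 k2 : List.In k1 G -> List.In k2 G ->
  sub_retract k1 = sub_retract k2 -> k1 = k2.
Proof.
move=> G1 G2.
by rewrite (sub_retractE (gen_gen mul one G1)) (sub_retractE (gen_gen mul one G2)) => -[].
Qed.

Lemma sub_retract_mul_gen k1 k2 : List.In k1 G -> List.In k2 G ->
  sub_retract (mul k1 k2) = sub_mul (sub_retract k1) (sub_retract k2).
Proof.
move=> G1 G2; have g1 := gen_gen mul one G1; have g2 := gen_gen mul one G2.
by rewrite (sub_retractE g1) (sub_retractE g2) (sub_retractE (gen_mul g1 g2)).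
Qed.

Lemma sub_retract_one : sub_retract one = sub_one mul one G.
Proof. exact: sub_retractE. Qed.

End Retraction.

Theorem proposition3p6 (M : Type) (mul : M -> M -> M) (one : M) :
  monoid_laws mul one -> locally_sofic mul one -> sofic mul one.
Proof.
move=> _ loc_sofic K eps eps_gt0.
have [X [psi [X_gt0 [psi_inj psi_mor]]]] :=
  loc_sofic K (map (sub_retract mul one K) K) eps eps_gt0.
exists X, (fun m => psi (sub_retract mul one K m)); split=> //; split.
- exact: Kalpha_injective_comp (@sub_retract_inj_gen M mul one K) psi_inj.
- exact: Keps_morphism_comp (@sub_retract_mul_gen M mul one K)
    (sub_retract_one mul one K) psi_mor.
Qed.
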